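(* Let $F$ be a field with $\mathrm{char}\,F\neq 2$, and let $I_n$ be the $F$-algebra defined in the context. (a) If $F$ is totally real, then for every $n\ge1$ and every $\lambda\in F$, every Rota--Baxter operator of weight $\lambda$ on $I_n$ is trivial, i.e. equals $0$ or $-\lambda\,\mathrm{id}$. (b) If $F$ is quadratically closed, then for every $n\ge 2$ and every nonzero $\lambda\in F$ there exists a nontrivial Rota--Baxter operator of weight $\lambda$ on $I_n$ (i.e. one different from $0$ and $-\lambda\,\mathrm{id}$), and for every $n\ge 3$ there exists a nonzero Rota--Baxter operator of weight $0$ on $I_n$.
   Context: $I_n$ denotes the $n$-dimensional (non-associative) algebra over $F$ with basis $e_1,\ldots,e_n$ and multiplication given by $e_n\cdot e_n=2e_n$, $e_n\cdot e_j=e_j$, $e_j\cdot e_j=e_n$ for $j=1,\ldots,n-1$, with all other products of basis elements equal to zero (extended bilinearly). A linear operator $R\colon A\to A$ is a Rota--Baxter operator of weight $\lambda\in F$ if $R(x)R(y)=R(R(x)y+xR(y)+\lambda xy)$ for all $x,y\in A$. The operators $0$ and $-\lambda\,\mathrm{id}$ are always Rota--Baxter operators of weight $\lambda$ and are called trivial. A field $F$ is totally real if $\nu_1^2+\cdots+\nu_t^2=0$ with $\nu_i\in F$ implies $\nu_1=\cdots=\nu_t=0$. A field is quadratically closed if every quadratic equation over it has a solution in it. *)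

From HB Require Import structures.
From mathcomp Require Import all_boot all_order all_algebra.
Set Implicit Arguments. Unset Strict Implicit. Unset Printing Implicit Defensive.
Import GRing.Theory.
Local Open Scope ring_scope.

(* The algebra I_n is modelled on coordinate row vectors 'rV[F]_n; the basis
   vector e_(k+1) is the k-th coordinate vector (k : 'I_n), so e_n is the
   last coordinate [ord_max].  We take n = m.+1 to have e_n available. *)

Definition In_basis_mul (F : fieldType) (m : nat) (i j : 'I_m.+1) : 'rV[F]_m.+1 :=
  if (i == ord_max) && (j == ord_max) then 2%:R *: delta_mx 0 ord_max
  else if i == ord_max then delta_mx 0 j
  else if i == j then delta_mx 0 ord_max
  else 0.

Definition In_mul (F : fieldType) (m : nat) (x y : 'rV[F]_m.+1) : 'rV[F]_m.+1 :=
  \sum_(i < m.+1) \sum_(j < m.+1) (x 0 i * y 0 j) *: In_basis_mul F i j.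

Definition is_RB (F : fieldType) (m : nat) (lam : F)
    (R : {linear 'rV[F]_m.+1 -> 'rV[F]_m.+1}) : Prop :=
  forall x y : 'rV[F]_m.+1,
    In_mul (R x) (R y) = R (In_mul (R x) y + In_mul x (R y) + lam *: In_mul x y).

Definition is_trivial_RB (F : fieldType) (m : nat) (lam : F)
    (R : {linear 'rV[F]_m.+1 -> 'rV[F]_m.+1}) : Prop :=
  (forall x, R x = 0) \/ (forall x, R x = - (lam *: x)).

Definition totally_real (F : fieldType) : Prop :=
  forall (t : nat) (nu : 'I_t -> F), \sum_(i < t) nu i ^+ 2 = 0 -> forall i, nu i = 0.

Definition quadratically_closed (F : fieldType) : Prop :=
  forall a b c : F, a != 0 -> exists x : F, a * x ^+ 2 + b * x + c = 0.

From HB Require Import structures.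
From mathcomp Require Import all_boot all_order all_algebra.
From mathcomp Require Import ring.
Set Implicit Arguments. Unset Strict Implicit. Unset Printing Implicit Defensive.
Import GRing.Theory.
Local Open Scope ring_scope.

(* With e := e_n and <x, y> the standard dot product, the product of I_n is
   x y = x_n y + <x, y> e, and after cancelling R(x)_n R(y) the Rota-Baxter
   identity reads <Rx, Ry> e = (<Rx, y> + <x, Ry> + lam <x, y>) R(e)
   + x_n (R(Ry) + lam Ry).
   Over a totally real field <z, z> = 0 forces z = 0.  Taking x in the
   hyperplane x_n = 0, either R(e) is a multiple a e of e, or both sides vanish,
   which kills R on the hyperplane and then forces R(e) into F e anyway.  The
   identity at x = y = e gives 2 a (a + lam) = 0, and on the hyperplane
   <Rx - a x, Rx - a x> = a (a + lam) <x, x> = 0, so R = a id with a = 0 or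
   a = -lam.
   Conversely, if i^2 = -1 in F, the rank-one operators x |-> x_j f with j < n,
   <f, f> = 0 and f_j = -lam satisfy the identity, and the isotropic vectors
   e_k + i e_l provide such f. *)

Section InAlgebra.
Variables (F : fieldType) (m : nat).
Local Notation V := 'rV[F]_m.+1.
Local Notation en := (@delta_mx F 1 m.+1 0 ord_max).

Lemma row_deltaE (k l : 'I_m.+1) : ('e_k : V) 0 l = (k == l)%:R.
Proof. by rewrite mxE eqxx eq_sym. Qed.

Lemma row_delta_diag (k : 'I_m.+1) : ('e_k : V) 0 k = 1.
Proof. by rewrite row_deltaE eqxx. Qed.

Lemma row_delta_off (k l : 'I_m.+1) : k != l -> ('e_k : V) 0 l = 0.
Proof. by move=> kl; rewrite row_deltaE (negbTE kl). Qed.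

Definition dot (x y : V) : F := \sum_i x 0 i * y 0 i.

Lemma dotC x y : dot x y = dot y x.
Proof. by apply: eq_bigr => i _; rewrite mulrC. Qed.

Lemma dotDl x y z : dot (x + y) z = dot x z + dot y z.
Proof. by rewrite /dot -big_split; apply: eq_bigr => i _; rewrite mxE mulrDl. Qed.

Lemma dotZl a x z : dot (a *: x) z = a * dot x z.
Proof. by rewrite /dot mulr_sumr; apply: eq_bigr => i _; rewrite mxE mulrA. Qed.

Lemma dotDr x y z : dot z (x + y) = dot z x + dot z y.
Proof. by rewrite dotC dotDl !(dotC z). Qed.

Lemma dotZr a x z : dot z (a *: x) = a * dot z x.
Proof. by rewrite dotC dotZl dotC. Qed.

Lemma dot0l y : dot 0 y = 0.
Proof. by rewrite /dot big1 // => i _; rewrite mxE mul0r. Qed.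

Lemma dot_deltal k y : dot 'e_k y = y 0 k.
Proof.
rewrite /dot (bigD1 k) //= big1 ?addr0 => [|i ik]; first by rewrite row_delta_diag mul1r.
by rewrite row_deltaE eq_sym (negbTE ik) mul0r.
Qed.

Lemma dot_deltar k y : dot y 'e_k = y 0 k.
Proof. by rewrite dotC dot_deltal. Qed.

Lemma totally_real_dot_eq0 : totally_real F -> forall z, dot z z = 0 -> z = 0.
Proof.
move=> realF z zz0; apply/rowP => k; rewrite mxE.
by apply: (realF _ (z 0)); rewrite -[RHS]zz0; apply: eq_bigr => i _; rewrite expr2.
Qed.

Lemma In_basis_mulE (i j : 'I_m.+1) : In_basis_mul F i j =
  (i == ord_max)%:R *: 'e_j + (i == j)%:R *: en.
Proof.
rewrite /In_basis_mul; case: (eqVneq i ord_max) => [->|ni];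
  case: (eqVneq j ord_max) => [->|nj] /=.
- by rewrite scale1r scaler_nat mulr2n.
- by rewrite scale1r scale0r addr0.
- by rewrite scale0r add0r; case: eqP => _; rewrite ?scale0r ?scale1r.
- by rewrite scale0r add0r; case: eqP => _; rewrite ?scale0r ?scale1r.
Qed.

Lemma In_mulE (x y : V) : In_mul x y = x 0 ord_max *: y + dot x y *: en.
Proof.
rewrite /In_mul.
under eq_bigr do under eq_bigr do rewrite In_basis_mulE scalerDr.
under eq_bigr do rewrite big_split /=.
rewrite big_split /=; congr (_ + _).
  rewrite (bigD1 ord_max) //= [X in _ + X]big1 ?addr0; last first.
    by move=> i ni; apply: big1 => j _; rewrite (negbTE ni) scale0r scaler0.
  rewrite [in RHS](row_sum_delta y) scaler_sumr; apply: eq_bigr => j _.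
  by rewrite eqxx scale1r scalerA.
rewrite /dot scaler_suml; apply: eq_bigr => i _.
rewrite (bigD1 i) //= [X in _ + X]big1 ?addr0; last first.
  by move=> j /negbTE; rewrite eq_sym => ->; rewrite scale0r scaler0.
by rewrite eqxx scale1r.
Qed.

Definition RB_reduced (lam : F) (R : V -> V) := forall x y : V,
  dot (R x) (R y) *: en = (dot (R x) y + dot x (R y) + lam * dot x y) *: R en
     + x 0 ord_max *: (R (R y) + lam *: R y).

Lemma is_RBE lam (R : {linear V -> V}) : is_RB lam R <-> RB_reduced lam R.
Proof.
have expand x y : R (In_mul (R x) y + In_mul x (R y) + lam *: In_mul x y)
  = R x 0 ord_max *: R y + ((dot (R x) y + dot x (R y) + lam * dot x y) *: R en
     + x 0 ord_max *: (R (R y) + lam *: R y)).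
  rewrite !In_mulE !(linearD, linearZ) /=.
  by apply/rowP => k; rewrite !mxE; ring.
split=> RB x y; have := RB x y; rewrite expand In_mulE; first exact: addrI.
by move=> ->.
Qed.

Lemma scale_en_last a : (a *: en) 0 ord_max = a.
Proof. by rewrite mxE row_delta_diag mulr1. Qed.

Lemma scale_en_inj a b : a *: en = b *: en -> a = b.
Proof. by move/(congr1 (fun v : V => v 0 ord_max)); rewrite !scale_en_last. Qed.

Lemma scale_en_indep (v : V) c d : v != v 0 ord_max *: en ->
  c *: en = d *: v -> c = 0 /\ d = 0.
Proof.
move=> v_indep cd; have d0 : d = 0.
  apply/eqP/negPn/negP => d_neq0; move/eqP: v_indep; apply.
  have -> : v = d^-1 *: (c *: en) by rewrite cd scalerA mulVf // scale1r.
  by rewrite scalerA scale_en_last.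
split=> //; move/(congr1 (fun v : V => v 0 ord_max)): cd.
by rewrite d0 scale0r scale_en_last mxE.
Qed.

Section RBTotallyReal.
Variables (lam : F) (R : {linear V -> V}).
Hypothesis RB_R : RB_reduced lam R.

Lemma RB_last0 (x : V) : x 0 ord_max = 0 -> forall y,
  dot (R x) (R y) *: en = (dot (R x) y + dot x (R y) + lam * dot x y) *: R en.
Proof. by move=> x_n0 y; rewrite RB_R x_n0 scale0r addr0. Qed.

Lemma RB_en_eigenvalue a : (2%:R : F) != 0 -> R en = a *: en -> a * (a + lam) = 0.
Proof.
move=> two_neq0 Ren; have := RB_R en en.
rewrite Ren [R (_ *: _)]linearZZ Ren !dotZl !dotZr dot_deltal row_delta_diag.
rewrite scale1r !scalerA -!scalerDl => /scale_en_inj E.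
(* substitute [E] for one of the two copies of [a * (a * 1)] in [0] *)
have : (a * (a + lam)) *+ 2 = 0 by rewrite -(subrr (a * (a * 1))) {1}E; ring.
by move/eqP; rewrite -mulr_natl mulf_eq0 (negbTE two_neq0) => /eqP.
Qed.

Lemma RB_sub_eigen_isotropic a (x : V) : a * (a + lam) = 0 -> R en = a *: en ->
  x 0 ord_max = 0 -> dot (R x - a *: x) (R x - a *: x) = 0.
Proof.
move=> a_root Ren x_n0; have := RB_R x x.
rewrite x_n0 scale0r addr0 Ren scalerA => /scale_en_inj dotRR.
rewrite -scaleNr !dotDl !dotDr !dotZl !dotZr dotRR (dotC x (R x)).
by transitivity (a * (a + lam) * dot x x); [ring | rewrite a_root mul0r].
Qed.

Hypothesis realF : totally_real F.

Lemma RB_scalar a : a * (a + lam) = 0 -> R en = a *: en -> forall x, R x = a *: x.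
Proof.
move=> a_root Ren x; pose x' := x - x 0 ord_max *: en.
have x'_n0 : x' 0 ord_max = 0 by rewrite !mxE !eqxx mulr1 subrr.
have Rx' : R x' = a *: x'.
  apply/eqP; rewrite -subr_eq0; apply/eqP/(totally_real_dot_eq0 realF).
  exact: RB_sub_eigen_isotropic.
have -> : x = x' + x 0 ord_max *: en by rewrite subrK.
by rewrite linearD linearZ /= Rx' Ren scalerA [_ * a]mulrC -scalerA -scalerDr.
Qed.

Lemma RB_en_eigen : R en = R en 0 ord_max *: en.
Proof.
apply/eqP/negPn/negP => Ren_indep.
have R_vanish (x : V) : x 0 ord_max = 0 -> R x = 0.
  move=> x_n0; apply: (totally_real_dot_eq0 realF).
  by have [] := scale_en_indep Ren_indep (RB_last0 x_n0 x).
apply: (negP Ren_indep); apply/eqP/rowP => k; rewrite mxE.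
have [->|k_n] := eqVneq k ord_max; first by rewrite row_delta_diag mulr1.
have ek_n0 : ('e_k : V) 0 ord_max = 0 by rewrite row_delta_off.
have [_] := scale_en_indep Ren_indep (RB_last0 ek_n0 en).
have n_k : ord_max != k by rewrite eq_sym.
rewrite R_vanish // dot0l dot_deltal dot_deltar ek_n0 mulr0 add0r addr0.
by rewrite row_delta_off // mulr0.
Qed.

Lemma RB_trivial : (2%:R : F) != 0 -> is_trivial_RB lam R.
Proof.
move=> two_neq0; set a := R en 0 ord_max.
have a_root := RB_en_eigenvalue two_neq0 RB_en_eigen.
have Ra := RB_scalar a_root RB_en_eigen.
move/eqP: a_root; rewrite mulf_eq0 => /orP[/eqP a0 | ].
  by left=> x; rewrite Ra a0 scale0r.
by rewrite addr_eq0 => /eqP a_lam; right=> x; rewrite Ra a_lam scaleNr.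
Qed.

End RBTotallyReal.

Definition rank_one (j : 'I_m.+1) (f : V) : {linear V -> V} := mulmxr (delta_mx j 0 *m f).

Lemma rank_oneE j f x : rank_one j f x = x 0 j *: f.
Proof. by rewrite /= mulmxA -colE [col j x]mx11_scalar mul_scalar_mx mxE. Qed.

Lemma rank_one_RB lam j f : j != ord_max -> dot f f = 0 -> f 0 j = - lam ->
  RB_reduced lam (rank_one j f).
Proof.
move=> j_n ff fj x y; have n_j : ord_max != j by rewrite eq_sym.
rewrite !rank_oneE !dotZl !dotZr ff row_delta_off //.
by apply/rowP => k; rewrite !mxE fj; ring.
Qed.

Lemma dot_isotropic (s : F) (k l : 'I_m.+1) : s ^+ 2 = -1 -> k != l ->
  dot ('e_k + s *: 'e_l) ('e_k + s *: 'e_l) = 0.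
Proof.
move=> s2 kl; have lk : l != k by rewrite eq_sym.
rewrite !(dotZl, dotZr, dotDl, dotDr) !dot_deltal !row_delta_diag !row_delta_off //.
ring: s2.
Qed.

Lemma RB_nontrivial_exists (s lam : F) : s ^+ 2 = -1 -> (1 <= m)%N -> lam != 0 ->
  exists R : {linear V -> V}, is_RB lam R /\ ~ is_trivial_RB lam R.
Proof.
move=> s2 m_gt0 lam_neq0.
have O_n : ord0 != ord_max :> 'I_m.+1 by rewrite -val_eqE /= eq_sym -lt0n.
have n_O : ord_max != ord0 :> 'I_m.+1 by rewrite eq_sym.
pose f := - lam *: ('e_ord0 + s *: en).
have f0 : f 0 ord0 = - lam by rewrite !mxE /= (negbTE O_n) /=; ring.
have f_neq0 : f != 0.
  by apply: contra_neq lam_neq0 => f_eq0; apply/eqP; rewrite -oppr_eq0 -f0 f_eq0 mxE.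
exists (rank_one ord0 f); split.
  apply/is_RBE/rank_one_RB => //.
  by rewrite dotZl dotZr dot_isotropic // !mulr0.
case=> [R0 | Rlam].
  by move/eqP: f_neq0; apply; rewrite -(R0 'e_ord0) rank_oneE row_delta_diag scale1r.
have := Rlam en; rewrite rank_oneE row_delta_off // scale0r -scaleNr -(scale0r en).
by move/scale_en_inj/esym/eqP; rewrite oppr_eq0 (negbTE lam_neq0).
Qed.

Lemma RB0_nonzero_exists (s : F) : s ^+ 2 = -1 -> (2 <= m)%N ->
  exists R : {linear V -> V}, is_RB 0 R /\ exists x, R x != 0.
Proof.
move=> s2 m_ge2; pose j : 'I_m.+1 := inord 1.
have j_val : (j : nat) = 1%N by rewrite inordK // ltnS ltnW.
have j_n : j != ord_max by rewrite -val_eqE /= j_val neq_ltn m_ge2.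
have j_O : j != ord0 by rewrite -val_eqE /= j_val.
have O_n : ord0 != ord_max :> 'I_m.+1 by rewrite -val_eqE /= eq_sym -lt0n ltnW.
pose f := 'e_ord0 + s *: en.
have fj : f 0 j = - 0 by rewrite !mxE /= (negbTE j_O) (negbTE j_n) /=; ring.
have f0 : f 0 ord0 = 1 by rewrite !mxE /= (negbTE O_n) /=; ring.
exists (rank_one j f); split; first exact/is_RBE/rank_one_RB/fj/dot_isotropic.
exists 'e_j; rewrite rank_oneE row_delta_diag scale1r.
by apply: contra_neq (oner_neq0 F) => f_eq0; rewrite -f0 f_eq0 mxE.
Qed.

End InAlgebra.

Lemma quadratically_closed_sqrtN1 (F : fieldType) :
  quadratically_closed F -> exists s : F, s ^+ 2 = -1.
Proof.
move=> qcF; have [s] := qcF 1 0 1 (oner_neq0 F).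
by rewrite mul1r mul0r addr0 => /eqP; rewrite addr_eq0 => /eqP; exists s.
Qed.

Theorem corollary2 (F : fieldType) (hchar : (2%:R : F) != 0) :
  (totally_real F ->
     forall (m : nat) (lam : F) (R : {linear 'rV[F]_m.+1 -> 'rV[F]_m.+1}),
       is_RB lam R -> is_trivial_RB lam R)
  /\
  (quadratically_closed F ->
     (forall (m : nat) (lam : F), (1 <= m)%N -> lam != 0 ->
        exists R : {linear 'rV[F]_m.+1 -> 'rV[F]_m.+1},
          is_RB lam R /\ ~ is_trivial_RB lam R)
     /\
     (forall m : nat, (2 <= m)%N ->
        exists R : {linear 'rV[F]_m.+1 -> 'rV[F]_m.+1},
          is_RB 0 R /\ exists x, R x != 0)).
Proof.
split=> [realF m lam R /is_RBE RB_R | /quadratically_closed_sqrtN1 [s s2]].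
  exact: RB_trivial.
split=> m; [move=> lam; exact: RB_nontrivial_exists s2 | exact: RB0_nonzero_exists s2].
Qed.
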